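(* In $TTR$, if $A$ is a $\perp$-type and $A\subseteq B$, then $B$ is a $\perp$-type.
   Context: $TTR$ types: over a second-order language with first-order variables, function symbols, $n$-ary predicate variables and symbols, and a fixed system $\mathbf E$ of equations; atomic $\perp$ and $X(t_1,\dots,t_n)$; constructors $\to$, $\forall x$, $\forall X$, and $\mu Cx_1\dots x_nA\langle t_1,\dots,t_n\rangle$ for $C$ an $n$-ary predicate symbol occurring and positive in $A$. Subtyping $\subseteq$ is generated by: reflexivity; $A\subseteq A',B\subseteq B'\Rightarrow A'\to B\subseteq A\to B'$; $A[G/v]\subseteq B\Rightarrow\forall vA\subseteq B$ ($G$ a term or formula as appropriate); $A\subseteq B\Rightarrow A\subseteq\forall vB$ ($v$ not free in $A$); $A\subseteq B[v/y]\Rightarrow A\subseteq B[w/y]$ for $v=w$ an instance of an equation of $\mathbf E$; transitivity; $D[\mu C\bar xD\langle\bar z\rangle/C(\bar z)][\bar t/\bar x]\subseteq\mu C\bar xD\langle\bar t\rangle$ and its converse; $D[E/C(\bar x)]\subseteq E\Rightarrow\mu C\bar xD\langle\bar t\rangle\subseteq E[\bar t/\bar x]$. $\perp$-types: $\perp$ is a $\perp$-type; if $A$ is a $\perp$-type then $B\to A$ (any type $B$), $\forall vA$ (any variable $v$), and $\mu Cx_1\dots x_nA\langle t_1,\dots,t_n\rangle$ ($C$ an $n$-ary predicate symbol occurring and positive in $A$) are $\perp$-types. *)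

From Stdlib Require Import List Arith Bool.
Import ListNotations.

Inductive term : Type :=
| TVar (i : nat)
| TFun (f : nat) (ts : list term).

Fixpoint tm_subst (s : nat -> term) (t : term) : term :=
  match t with
  | TVar i => s i
  | TFun f ts => TFun f (map (tm_subst s) ts)
  end.

(* lift a term substitution under n first-order binders *)
Definition upn (n : nat) (s : nat -> term) : nat -> term :=
  fun i => if i <? n then TVar i else tm_subst (fun j => TVar (j + n)) (s (i - n)).

(* Bot            : the atomic type ⊥
   Atom X ts      : X(t1,...,tn), X a predicate variable/symbol (de Bruijn index)
   Arr A B        : A → B
   AllT A         : ∀x A      (binds first-order variable 0 in A)
   AllP n A       : ∀X A      (X n-ary, binds predicate variable 0 in A)
   Mu n A ts      : μ C x1..xn A ⟨t1..tn⟩ (binds predicate variable 0 = C, n-ary,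
                    and first-order variables 0..n-1 = x1..xn in A; ts lies outside) *)
Inductive ty : Type :=
| Bot
| Atom (X : nat) (ts : list term)
| Arr (A B : ty)
| AllT (A : ty)
| AllP (n : nat) (A : ty)
| Mu (n : nat) (A : ty) (ts : list term).

Fixpoint ty_tsubst (s : nat -> term) (A : ty) : ty :=
  match A with
  | Bot => Bot
  | Atom X ts => Atom X (map (tm_subst s) ts)
  | Arr A B => Arr (ty_tsubst s A) (ty_tsubst s B)
  | AllT A => AllT (ty_tsubst (upn 1 s) A)
  | AllP n A => AllP n (ty_tsubst s A)
  | Mu n A ts => Mu n (ty_tsubst (upn n s) A) (map (tm_subst s) ts)
  end.

Definition uprn (r : nat -> nat) : nat -> nat :=
  fun X => match X with 0 => 0 | S m => S (r m) end.

Fixpoint ty_prename (r : nat -> nat) (A : ty) : ty :=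
  match A with
  | Bot => Bot
  | Atom X ts => Atom (r X) ts
  | Arr A B => Arr (ty_prename r A) (ty_prename r B)
  | AllT A => AllT (ty_prename r A)
  | AllP n A => AllP n (ty_prename (uprn r) A)
  | Mu n A ts => Mu n (ty_prename (uprn r) A) ts
  end.

(* value of a predicate substitution: either a renaming to a predicate variable,
   or a formula abstraction λ x1..xk. F (F has free first-order variables
   0..k-1 for the parameters, and k+i for the ambient variable i). *)
Inductive pval : Type :=
| PVar (m : nat)
| PAbs (k : nat) (F : ty).

(* [ts / x1..xk], other variables lowered by k *)
Definition inst_sub (k : nat) (ts : list term) : nat -> term :=
  fun i => if i <? k then nth i ts (TVar 0) else TVar (i - k).

Definition pval_tshift (n : nat) (v : pval) : pval :=
  match v with
  | PVar m => PVar m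
  | PAbs k F => PAbs k (ty_tsubst (upn k (fun j => TVar (j + n))) F)
  end.

Definition pval_pshift (v : pval) : pval :=
  match v with
  | PVar m => PVar (S m)
  | PAbs k F => PAbs k (ty_prename S F)
  end.

Definition up_p (r : nat -> pval) : nat -> pval :=
  fun X => match X with 0 => PVar 0 | S m => pval_pshift (r m) end.

Fixpoint ty_psubst (r : nat -> pval) (A : ty) : ty :=
  match A with
  | Bot => Bot
  | Atom X ts =>
      match r X with
      | PVar m => Atom m ts
      | PAbs k F => ty_tsubst (inst_sub k ts) F
      end
  | Arr A B => Arr (ty_psubst r A) (ty_psubst r B)
  | AllT A => AllT (ty_psubst (fun X => pval_tshift 1 (r X)) A)
  | AllP n A => AllP n (ty_psubst (up_p r) A)
  | Mu n A ts => Mu n (ty_psubst (up_p (fun X => pval_tshift n (r X))) A) ts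
  end.

(* A[G/x] for the first-order variable 0 *)
Definition tsub0 (G : term) : nat -> term :=
  fun i => match i with 0 => G | S m => TVar m end.

(* A[(λ x1..xk. F)/X] for the predicate variable 0 *)
Definition psub0 (k : nat) (F : ty) : nat -> pval :=
  fun X => match X with 0 => PAbs k F | S m => PVar m end.

Definition idargs (n : nat) : list term := map TVar (seq 0 n).

Definition skip (n : nat) : nat -> term :=
  fun i => if i <? n then TVar i else TVar (i + n).

(* D[ μCx̄D⟨z̄⟩ / C(z̄) ][ t̄ / x̄ ] *)
Definition unfold_mu (n : nat) (D : ty) (ts : list term) : ty :=
  ty_psubst (psub0 n (Mu n (ty_tsubst (skip n) D) (idargs n)))
            (ty_tsubst (inst_sub n ts) D).

Fixpoint occ (k : nat) (A : ty) : bool :=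
  match A with
  | Bot => false
  | Atom X _ => X =? k
  | Arr A B => occ k A || occ k B
  | AllT A => occ k A
  | AllP _ A => occ (S k) A
  | Mu _ A _ => occ (S k) A
  end.

Fixpoint pos (k : nat) (A : ty) : bool :=
  match A with
  | Bot => true
  | Atom _ _ => true
  | Arr A B => neg k A && pos k B
  | AllT A => pos k A
  | AllP _ A => pos (S k) A
  | Mu _ A _ => pos (S k) A
  end
with neg (k : nat) (A : ty) : bool :=
  match A with
  | Bot => true
  | Atom X _ => negb (X =? k)
  | Arr A B => pos k A && neg k B
  | AllT A => neg k A
  | AllP _ A => neg (S k) A
  | Mu _ A _ => neg (S k) A
  end.

Fixpoint wf (A : ty) : Prop :=
  match A with
  | Bot => True
  | Atom _ _ => True
  | Arr A B => wf A /\ wf B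
  | AllT A => wf A
  | AllP _ A => wf A
  | Mu n A ts => wf A /\ occ 0 A = true /\ pos 0 A = true /\ length ts = n
  end.

(* E : the fixed system of equations l = r between first-order terms *)
Definition eq_instance (E : term -> term -> Prop) (v w : term) : Prop :=
  exists l r (s : nat -> term), E l r /\ v = tm_subst s l /\ w = tm_subst s r.

Inductive subt (E : term -> term -> Prop) : ty -> ty -> Prop :=
| subt_refl A : wf A -> subt E A A
| subt_arr A A' B B' : subt E A A' -> subt E B B' -> subt E (Arr A' B) (Arr A B')
| subt_allT_l A G B :
    wf (AllT A) -> subt E (ty_tsubst (tsub0 G) A) B -> subt E (AllT A) B
| subt_allP_l n A F B :
    wf (AllP n A) -> wf F -> subt E (ty_psubst (psub0 n F) A) B -> subt E (AllP n A) B
| subt_allT_r A B :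
    wf A -> subt E (ty_tsubst (fun i => TVar (S i)) A) B -> subt E A (AllT B)
| subt_allP_r n A B :
    wf A -> subt E (ty_prename S A) B -> subt E A (AllP n B)
| subt_eq A B v w :
    eq_instance E v w -> wf (ty_tsubst (tsub0 w) B) ->
    subt E A (ty_tsubst (tsub0 v) B) -> subt E A (ty_tsubst (tsub0 w) B)
| subt_trans A B C : subt E A B -> subt E B C -> subt E A C
| subt_fold n D ts :
    wf (Mu n D ts) -> wf (unfold_mu n D ts) -> subt E (unfold_mu n D ts) (Mu n D ts)
| subt_unfold n D ts :
    wf (Mu n D ts) -> wf (unfold_mu n D ts) -> subt E (Mu n D ts) (unfold_mu n D ts)
| subt_mu_ind n D ts F :
    wf (Mu n D ts) -> wf (ty_tsubst (inst_sub n ts) F) ->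
    subt E (ty_psubst (psub0 n (ty_tsubst (skip n) F)) D) F ->
    subt E (Mu n D ts) (ty_tsubst (inst_sub n ts) F).

Inductive bot_type : ty -> Prop :=
| bt_bot : bot_type Bot
| bt_arr B A : wf B -> bot_type A -> bot_type (Arr B A)
| bt_allT A : bot_type A -> bot_type (AllT A)
| bt_allP n A : bot_type A -> bot_type (AllP n A)
| bt_mu n A ts :
    occ 0 A = true -> pos 0 A = true -> length ts = n ->
    bot_type A -> bot_type (Mu n A ts).


(* A ⊥-type is exactly a well-formed type whose result type, after stripping
   arrows, quantifiers and μ-binders, is ⊥.  Subtyping preserves
   well-formedness, and every rule preserves the result type: substitutions
   leave it unchanged or can only replace a result atom by a formula, and
   unfolding a μ-type substitutes a copy of its own body, which ends in ⊥
   exactly when the body does. *)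

Fixpoint ends_in_bot (A : ty) : Prop :=
  match A with
  | Bot => True
  | Atom _ _ => False
  | Arr _ B => ends_in_bot B
  | AllT A => ends_in_bot A
  | AllP _ A => ends_in_bot A
  | Mu _ A _ => ends_in_bot A
  end.

Lemma ends_in_bot_tsubst A : forall s, ends_in_bot (ty_tsubst s A) <-> ends_in_bot A.
Proof. induction A; intros s; simpl; auto; reflexivity. Qed.

Lemma ends_in_bot_prename A : forall r, ends_in_bot (ty_prename r A) <-> ends_in_bot A.
Proof. induction A; intros r; simpl; auto; reflexivity. Qed.

Lemma ends_in_bot_psubst A : forall r, ends_in_bot A -> ends_in_bot (ty_psubst r A).
Proof. induction A; intros r H; simpl in *; auto; contradiction. Qed.

Definition pval_ends_in_bot (v : pval) : Prop :=
  match v with PVar _ => False | PAbs _ F => ends_in_bot F end.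

Lemma pval_ends_in_bot_tshift n v :
  pval_ends_in_bot (pval_tshift n v) -> pval_ends_in_bot v.
Proof. destruct v; simpl; auto. apply ends_in_bot_tsubst. Qed.

Lemma pval_ends_in_bot_pshift v :
  pval_ends_in_bot (pval_pshift v) -> pval_ends_in_bot v.
Proof. destruct v; simpl; auto. apply ends_in_bot_prename. Qed.

Lemma ends_in_bot_psubst_inv A : forall r,
  ends_in_bot (ty_psubst r A) ->
  ends_in_bot A \/ exists X, pval_ends_in_bot (r X).
Proof.
  induction A as [|X ts|A1 _ A2 IHA2|A IHA|n A IHA|n A IHA ts];
    intros r H; simpl in *; auto.
  - destruct (r X) as [m|k F] eqn:HX; [contradiction|].
    right; exists X; rewrite HX; simpl.
    apply (ends_in_bot_tsubst F (inst_sub k ts)); exact H.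
  - destruct (IHA _ H) as [HA|[X HX]]; auto.
    right; exists X; eapply pval_ends_in_bot_tshift; eauto.
  - destruct (IHA _ H) as [HA|[[|X] HX]]; auto; [contradiction|].
    right; exists X; apply pval_ends_in_bot_pshift; exact HX.
  - destruct (IHA _ H) as [HA|[[|X] HX]]; auto; [contradiction|].
    right; exists X.
    eapply pval_ends_in_bot_tshift, pval_ends_in_bot_pshift; eauto.
Qed.

Lemma ends_in_bot_unfold_mu n D ts :
  ends_in_bot (unfold_mu n D ts) <-> ends_in_bot D.
Proof.
  unfold unfold_mu; split; intro H.
  - destruct (ends_in_bot_psubst_inv _ _ H) as [HD|[[|X] HX]].
    + apply (ends_in_bot_tsubst D (inst_sub n ts)); exact HD.
    + apply (ends_in_bot_tsubst D (skip n)); exact HX.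
    + contradiction.
  - apply ends_in_bot_psubst, ends_in_bot_tsubst; exact H.
Qed.

Lemma bot_type_iff A : bot_type A <-> ends_in_bot A /\ wf A.
Proof.
  split.
  - induction 1; simpl; tauto.
  - induction A; simpl; intros [H W]; try contradiction.
    + constructor.
    + destruct W; constructor; auto.
    + constructor; auto.
    + constructor; auto.
    + destruct W as (W & Hocc & Hpos & Hlen); constructor; auto.
Qed.

Section Subtyping.

Variable E : term -> term -> Prop.

Lemma subt_wf A B : subt E A B -> wf A /\ wf B.
Proof. induction 1; simpl in *; tauto. Qed.

Lemma subt_ends_in_bot A B : subt E A B -> ends_in_bot A -> ends_in_bot B.
Proof.
  induction 1; simpl; intro H'; auto.
  - apply IHsubt, ends_in_bot_tsubst; exact H'.
  - apply IHsubt, ends_in_bot_psubst; exact H'.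
  - apply IHsubt, ends_in_bot_tsubst; exact H'.
  - apply IHsubt, ends_in_bot_prename; exact H'.
  - apply ends_in_bot_tsubst, (ends_in_bot_tsubst B (tsub0 v)); auto.
  - apply (ends_in_bot_unfold_mu n D ts); exact H'.
  - apply (ends_in_bot_unfold_mu n D ts); exact H'.
  - apply ends_in_bot_tsubst, IHsubt, ends_in_bot_psubst; exact H'.
Qed.

End Subtyping.

Theorem lemma6p1 (E : term -> term -> Prop) (A B : ty) :
  bot_type A -> subt E A B -> bot_type B.
Proof.
  intros HA HAB.
  apply bot_type_iff in HA as [HA _].
  apply bot_type_iff; split.
  - exact (subt_ends_in_bot E A B HAB HA).
  - exact (proj2 (subt_wf E A B HAB)).
Qed.
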